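(* Let $T$ be an MFQST with explicit bound $k$ on $n$ sources $z_1,\dots,z_n$ and sink $z_{BS}$. Then $$L(T)\ge\frac{1}{n+k+1}\sum_{i=1}^n|z_iz_{BS}|^2.$$
   Context: Let $Z=\{z_1,\dots,z_n\}\subset\mathbb{R}^2$ ($n\ge 1$) be a set of sources and $z_{BS}\in\mathbb{R}^2\setminus Z$ a sink; each source has supply $1$. A flow-dependent quadratic Steiner tree (FQST) consists of a finite set $S\subset\mathbb{R}^2$ of Steiner points and a tree $T$ with vertex set $Z\cup S\cup\{z_{BS}\}$ whose edges are directed towards $z_{BS}$. Every node other than the sink has exactly one out-edge, and the sink has none. Each edge $e$ carries a positive flow $f(e)$ such that: - at each source, the flow on its out-edge minus the total flow on its in-edges equals $1$; - at each Steiner point, the out-flow equals the total in-flow; - the sink receives total flow $n$. The cost is $L(T)=\sum_{e\in E(T)} f(e)|e|^2$. An MFQST with explicit bound $k$ minimises $L$ among all FQSTs with $|S|\le k$. *)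

From Stdlib Require Import Reals Lra List.
Import ListNotations.
Open Scope R_scope.

Definition point := (R * R)%type.
Definition dist2 (p q : point) : R := (fst p - fst q) ^ 2 + (snd p - snd q) ^ 2.

Definition sumR (l : list R) : R := fold_right Rplus 0 l.

Inductive vtx : Type := Src (i : nat) | Stn (j : nat) | Sink.

Definition vtx_eq_dec (u v : vtx) : {u = v} + {u <> v}.
Proof. decide equality; apply PeanoNat.Nat.eq_dec. Defined.

(* An FQST candidate: number of Steiner points, their positions,
   the out-neighbour (parent) map and the flow on each out-edge
   (flow v = flow on the out-edge of v; meaningless for the sink). *)
Record FQST := mkFQST {
  nst  : nat;
  spos : nat -> point;
  par  : vtx -> vtx;
  flow : vtx -> R
}.

Definition nonsink (n : nat) (T : FQST) : list vtx :=
  map Src (seq 0 n) ++ map Stn (seq 0 (nst T)).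

Definition is_vertex (n : nat) (T : FQST) (v : vtx) : Prop :=
  In v (nonsink n T) \/ v = Sink.

Definition pos (z : nat -> point) (zBS : point) (T : FQST) (v : vtx) : point :=
  match v with
  | Src i => z i
  | Stn j => spos T j
  | Sink => zBS
  end.

Definition inflow (n : nat) (T : FQST) (v : vtx) : R :=
  sumR (map (fun u => if vtx_eq_dec (par T u) v then flow T u else 0) (nonsink n T)).

(* The positions of all vertices are pairwise distinct, i.e. S is a set of
   points disjoint from Z and from z_BS (vertex set Z ∪ S ∪ {z_BS}). *)
Definition distinct_positions (n : nat) (z : nat -> point) (zBS : point) (T : FQST) : Prop :=
  forall u v, is_vertex n T u -> is_vertex n T v ->
    pos z zBS T u = pos z zBS T v -> u = v.

Definition is_FQST (n : nat) (z : nat -> point) (zBS : point) (T : FQST) : Prop :=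
  distinct_positions n z zBS T /\
  (forall v, In v (nonsink n T) -> is_vertex n T (par T v) /\ par T v <> v) /\
  (* the sink has no out-edge; the graph is a tree directed towards the sink:
     following out-edges from any vertex reaches the sink *)
  par T Sink = Sink /\
  (forall v, In v (nonsink n T) -> exists N, Nat.iter N (par T) v = Sink) /\
  (forall v, In v (nonsink n T) -> 0 < flow T v) /\
  (forall i, (i < n)%nat -> flow T (Src i) - inflow n T (Src i) = 1) /\
  (forall j, (j < nst T)%nat -> flow T (Stn j) = inflow n T (Stn j)) /\
  inflow n T Sink = INR n.

Definition cost (n : nat) (z : nat -> point) (zBS : point) (T : FQST) : R :=
  sumR (map (fun v => flow T v * dist2 (pos z zBS T v) (pos z zBS T (par T v)))
            (nonsink n T)).

Definition is_MFQST (n k : nat) (z : nat -> point) (zBS : point) (T : FQST) : Prop :=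
  is_FQST n z zBS T /\ (nst T <= k)%nat /\
  forall T', is_FQST n z zBS T' -> (nst T' <= k)%nat ->
    cost n z zBS T <= cost n z zBS T'.

(* Idea: give every vertex v the potential
       phi v = |x_v z_BS|^2 / d(v),
   where d(v) is the number of edges on the path from v to the sink.  Along an
   edge v -> p we have d(p) + 1 <= d(v), and the elementary inequality
       |a|^2 / (h + 1) <= |a - b|^2 + |b|^2 / h        (h > 0)
   shows that every edge pays at least the potential drop:
       |x_v x_p|^2 >= phi v - phi p.
   Weighting by the flows and using conservation, the total weighted drop
   telescopes to the sum of the potentials of the sources (each has supply 1,
   Steiner points have none, phi vanishes at the sink).  Finally a path to the
   sink visits distinct non-sink vertices, so d(z_i) <= n + |S| <= n + k, which
   gives phi z_i >= |z_i z_BS|^2 / (n + k + 1). *)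

From Pilot Require Import Defs.
From Stdlib Require Import Reals List.
From Stdlib Require Import Lra Lia Arith ClassicalEpsilon.
Open Scope R_scope.

Lemma sumR_app (l1 l2 : list R) : sumR (l1 ++ l2) = sumR l1 + sumR l2.
Proof. induction l1 as [|a l1 IH]; simpl; [lra | rewrite IH; lra]. Qed.

Lemma sumR_le {A : Type} (f g : A -> R) (l : list A) :
  (forall x, In x l -> f x <= g x) -> sumR (map f l) <= sumR (map g l).
Proof.
  induction l as [|a l IH]; simpl; intros H; [lra|].
  assert (f a <= g a) by auto.
  assert (sumR (map f l) <= sumR (map g l)) by auto.
  lra.
Qed.

Lemma sumR_ext {A : Type} (f g : A -> R) (l : list A) :
  (forall x, In x l -> f x = g x) -> sumR (map f l) = sumR (map g l).
Proof.
  induction l as [|a l IH]; simpl; intros H; [lra|].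
  rewrite H, IH by auto; lra.
Qed.

Lemma sumR_plus {A : Type} (f g : A -> R) (l : list A) :
  sumR (map (fun x => f x + g x) l) = sumR (map f l) + sumR (map g l).
Proof. induction l as [|a l IH]; simpl; [lra | rewrite IH; lra]. Qed.

Lemma sumR_minus {A : Type} (f g : A -> R) (l : list A) :
  sumR (map (fun x => f x - g x) l) = sumR (map f l) - sumR (map g l).
Proof. induction l as [|a l IH]; simpl; [lra | rewrite IH; lra]. Qed.

Lemma sumR_scal {A : Type} (c : R) (f : A -> R) (l : list A) :
  sumR (map (fun x => c * f x) l) = c * sumR (map f l).
Proof. induction l as [|a l IH]; simpl; [lra | rewrite IH; lra]. Qed.

Lemma sumR_zero {A : Type} (l : list A) : sumR (map (fun _ => 0) l) = 0.
Proof. induction l as [|a l IH]; simpl; [lra | rewrite IH; lra]. Qed.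

Lemma sumR_swap {A B : Type} (F : A -> B -> R) (l1 : list A) (l2 : list B) :
  sumR (map (fun x => sumR (map (fun y => F x y) l2)) l1) =
  sumR (map (fun y => sumR (map (fun x => F x y) l1)) l2).
Proof.
  induction l1 as [|a l1 IH]; simpl.
  - induction l2 as [|b l2 IH2]; simpl; [lra | rewrite <- IH2; lra].
  - rewrite IH, <- sumR_plus. reflexivity.
Qed.

Lemma sumR_indicator {A : Type} (eq_dec : forall x y : A, {x = y} + {x <> y})
  (x : A) (c : A -> R) (L : list A) :
  NoDup L ->
  sumR (map (fun w => if eq_dec x w then c w else 0) L) =
  if in_dec eq_dec x L then c x else 0.
Proof.
  induction L as [|a L IH]; intros ND; [reflexivity|].
  inversion ND as [|? ? Ha ND']; subst.
  simpl map. change (sumR (?u :: ?l)) with (u + sumR l). rewrite IH by exact ND'.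
  destruct (in_dec eq_dec x (a :: L)) as [Hin|Hout].
  - destruct (eq_dec x a) as [->|ne].
    + destruct (in_dec eq_dec a L); [contradiction | lra].
    + destruct Hin as [E|Hin]; [congruence|].
      destruct (in_dec eq_dec x L); [lra | contradiction].
  - destruct (eq_dec x a) as [->|ne]; [exfalso; apply Hout; left; reflexivity|].
    destruct (in_dec eq_dec x L) as [Hin|]; [exfalso; apply Hout; right; exact Hin | lra].
Qed.

Lemma dist2_nonneg (p q : point) : 0 <= dist2 p q.
Proof.
  unfold dist2. pose proof (pow2_ge_0 (fst p - fst q)). pose proof (pow2_ge_0 (snd p - snd q)).
  lra.
Qed.

(* One coordinate of the key inequality: it is a perfect square in disguise. *)
Lemma sq_div_succ_le (a b h : R) : 0 < h -> a ^ 2 / (h + 1) <= (a - b) ^ 2 + b ^ 2 / h.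
Proof.
  intros Hh.
  assert (Hgap : (a - b) ^ 2 + b ^ 2 / h - a ^ 2 / (h + 1)
                 = (h * a - (h + 1) * b) ^ 2 / (h * (h + 1))) by (field; lra).
  assert (Hsq : 0 <= (h * a - (h + 1) * b) ^ 2 / (h * (h + 1))).
  { apply Rmult_le_pos; [apply pow2_ge_0 | left; apply Rinv_0_lt_compat; nra]. }
  lra.
Qed.

Lemma dist2_div_drop (p q o : point) (hp hq : R) :
  0 < hq -> hq + 1 <= hp -> dist2 p o / hp <= dist2 p q + dist2 q o / hq.
Proof.
  intros Hq Hpq. unfold dist2.
  assert (Hshrink : ((fst p - fst o) ^ 2 + (snd p - snd o) ^ 2) / hp
          <= ((fst p - fst o) ^ 2 + (snd p - snd o) ^ 2) / (hq + 1)).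
  { apply Rmult_le_compat_l; [apply (dist2_nonneg p o) | apply Rinv_le_contravar; lra]. }
  pose proof (sq_div_succ_le (fst p - fst o) (fst q - fst o) hq Hq) as Hx.
  pose proof (sq_div_succ_le (snd p - snd o) (snd q - snd o) hq Hq) as Hy.
  replace (fst p - fst q) with (fst p - fst o - (fst q - fst o)) by ring.
  replace (snd p - snd q) with (snd p - snd o - (snd q - snd o)) by ring.
  unfold Rdiv in *. lra.
Qed.

(* The last edge into the sink: dividing by a hop count >= 1 only decreases. *)
Lemma dist2_div_le (p o : point) (h : R) : 1 <= h -> dist2 p o / h <= dist2 p o.
Proof.
  intros Hh. pose proof (dist2_nonneg p o).
  unfold Rdiv. rewrite <- (Rmult_1_r (dist2 p o)) at 2.
  apply Rmult_le_compat_l; auto. rewrite <- Rinv_1. apply Rinv_le_contravar; lra.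
Qed.

Section HopDistance.
Variables (A : Type) (f : A -> A) (t : A).

Definition least_hops (x : A) (N : nat) : Prop :=
  Nat.iter N f x = t /\ forall M, Nat.iter M f x = t -> (N <= M)%nat.

(* The hop distance from x to t (meaningful when x reaches t at all). *)
Definition hops (x : A) : nat := epsilon (inhabits 0%nat) (least_hops x).

Lemma iter_succ_r (m : nat) (x : A) : Nat.iter (S m) f x = Nat.iter m f (f x).
Proof. replace (S m) with (m + 1)%nat by lia. rewrite Nat.iter_add. reflexivity. Qed.

Lemma least_hops_exists (x : A) :
  (exists N, Nat.iter N f x = t) -> exists N, least_hops x N.
Proof.
  intros [N HN]. revert HN. induction N as [N IH] using lt_wf_ind. intros HN.
  destruct (classic (exists M, (M < N)%nat /\ Nat.iter M f x = t))
    as [[M [HMN HM]] | Hnone].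
  - exact (IH M HMN HM).
  - exists N. split; [exact HN|]. intros M HM.
    destruct (Nat.le_gt_cases N M); [assumption|]. exfalso; eauto.
Qed.

Lemma hops_spec (x : A) : (exists N, Nat.iter N f x = t) -> least_hops x (hops x).
Proof. intros H. unfold hops. apply epsilon_spec, least_hops_exists, H. Qed.

Lemma hops_pos (x : A) : (exists N, Nat.iter N f x = t) -> x <> t -> (1 <= hops x)%nat.
Proof.
  intros Hr Hx. destruct (hops_spec x Hr) as [Ht _].
  destruct (hops x); [contradiction | lia].
Qed.

Lemma hops_step (x : A) :
  (exists N, Nat.iter N f x = t) -> x <> t -> (hops (f x) + 1 <= hops x)%nat.
Proof.
  intros Hr Hx. pose proof (hops_pos x Hr Hx).
  destruct (hops_spec x Hr) as [Ht _].
  destruct (hops x) as [|m]; [lia|].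
  rewrite iter_succ_r in Ht.
  destruct (hops_spec (f x) (ex_intro _ m Ht)) as [_ Hmin].
  specialize (Hmin m Ht). lia.
Qed.

(* Pigeonhole: the path from x to t visits hops x distinct points other than
   t, so hops x is at most the length of any list containing them all. *)
Lemma hops_le_length (x : A) (L : list A) :
  (exists N, Nat.iter N f x = t) ->
  (forall j, Nat.iter j f x <> t -> In (Nat.iter j f x) L) ->
  (hops x <= length L)%nat.
Proof.
  intros Hr HL. destruct (hops_spec x Hr) as [Ht Hmin].
  set (h := hops x) in *.
  assert (Hinj : forall a b, (a < b < h)%nat -> Nat.iter a f x <> Nat.iter b f x).
  { intros a b Hab E.
    assert (Hshort : Nat.iter (h - b + a) f x = t).
    { rewrite Nat.iter_add, E, <- Nat.iter_add. replace (h - b + b)%nat with h by lia. exact Ht. }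
    specialize (Hmin _ Hshort). lia. }
  assert (ND : NoDup (map (fun j => Nat.iter j f x) (seq 0 h))).
  { apply NoDup_map_NoDup_ForallPairs; [|apply seq_NoDup].
    intros a b Ha Hb E. apply in_seq in Ha, Hb.
    destruct (Nat.lt_total a b) as [|[|]]; auto; exfalso.
    - apply (Hinj a b); [lia | exact E].
    - apply (Hinj b a); [lia | auto]. }
  assert (Hincl : incl (map (fun j => Nat.iter j f x) (seq 0 h)) L).
  { intros y Hy. apply in_map_iff in Hy. destruct Hy as [j [<- Hj]]. apply in_seq in Hj.
    apply HL. intros E. specialize (Hmin j E). lia. }
  pose proof (NoDup_incl_length ND Hincl) as Hlen.
  rewrite length_map, length_seq in Hlen. exact Hlen.
Qed.

End HopDistance.

Lemma nonsink_NoDup (n : nat) (T : FQST) : NoDup (nonsink n T).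
Proof.
  unfold nonsink. apply NoDup_app.
  - apply NoDup_map_NoDup_ForallPairs; [intros x y _ _ E; congruence | apply seq_NoDup].
  - apply NoDup_map_NoDup_ForallPairs; [intros x y _ _ E; congruence | apply seq_NoDup].
  - intros x H1 H2. apply in_map_iff in H1, H2.
    destruct H1 as [? [<- _]], H2 as [? [? _]]. discriminate.
Qed.

Lemma nonsink_not_Sink (n : nat) (T : FQST) (v : vtx) : In v (nonsink n T) -> v <> Sink.
Proof.
  unfold nonsink; intros H ->. apply in_app_or in H.
  destruct H as [H|H]; apply in_map_iff in H; destruct H as [? [? _]]; discriminate.
Qed.

Lemma length_nonsink (n : nat) (T : FQST) : length (nonsink n T) = (n + nst T)%nat.
Proof. unfold nonsink. rewrite length_app, !length_map, !length_seq. reflexivity. Qed.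

Section FlowTree.
Variables (n : nat) (z : nat -> point) (zBS : point) (T : FQST).
Hypothesis hF : is_FQST n z zBS T.

Let d : vtx -> nat := hops vtx (par T) Sink.

Lemma reaches_sink (v : vtx) : In v (nonsink n T) -> exists N, Nat.iter N (par T) v = Sink.
Proof. destruct hF as (_ & _ & _ & Hr & _). exact (Hr v). Qed.

Lemma iter_par_vertex (v : vtx) (j : nat) :
  is_vertex n T v -> is_vertex n T (Nat.iter j (par T) v).
Proof.
  destruct hF as (_ & Hp & Hs & _). intros Hv. induction j as [|j IH]; simpl; [exact Hv|].
  destruct IH as [H|H]; [apply Hp, H | rewrite H, Hs; right; reflexivity].
Qed.

Lemma hops_nonsink_pos (v : vtx) : In v (nonsink n T) -> (1 <= d v)%nat.
Proof. intros Hv. apply hops_pos; [apply reaches_sink, Hv | apply (nonsink_not_Sink n T v Hv)]. Qed.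

Lemma hops_nonsink_step (v : vtx) : In v (nonsink n T) -> (d (par T v) + 1 <= d v)%nat.
Proof. intros Hv. apply hops_step; [apply reaches_sink, Hv | apply (nonsink_not_Sink n T v Hv)]. Qed.

(* A path to the sink passes through distinct non-sink vertices only. *)
Lemma hops_nonsink_bound (v : vtx) : In v (nonsink n T) -> (d v <= n + nst T)%nat.
Proof.
  intros Hv. rewrite <- length_nonsink. apply hops_le_length; [apply reaches_sink, Hv|].
  intros j Hj. destruct (iter_par_vertex v j (or_introl Hv)) as [H|H]; [exact H | contradiction].
Qed.

(* Reindexing by heads of edges: sum_v f(v) phi(par v) = sum_w phi(w) inflow(w),
   where edges into the sink drop out because phi vanishes there. *)
Lemma sum_flow_parent (phi : vtx -> R) :
  phi Sink = 0 ->
  sumR (map (fun v => flow T v * phi (par T v)) (nonsink n T)) =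
  sumR (map (fun w => phi w * inflow n T w) (nonsink n T)).
Proof.
  intros phiS. destruct hF as (_ & Hp & _).
  transitivity (sumR (map (fun w => sumR (map (fun u =>
      if vtx_eq_dec (par T u) w then phi w * flow T u else 0) (nonsink n T))) (nonsink n T))).
  2:{ apply sumR_ext; intros w _. unfold inflow. rewrite <- sumR_scal.
      apply sumR_ext; intros u _. destruct (vtx_eq_dec (par T u) w); ring. }
  rewrite sumR_swap. apply sumR_ext. intros u Hu.
  rewrite (sumR_indicator vtx_eq_dec (par T u) (fun w => phi w * flow T u)) by apply nonsink_NoDup.
  destruct (in_dec vtx_eq_dec (par T u) (nonsink n T)) as [_|Hout]; [ring|].
  destruct (Hp u Hu) as [[Hin|Hsink] _]; [contradiction | rewrite Hsink, phiS; ring].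
Qed.

(* Flow conservation makes any potential vanishing at the sink telescope:
   the flow-weighted drops along all edges add up to the potentials of the
   sources. *)
Lemma flow_telescoping (phi : vtx -> R) :
  phi Sink = 0 ->
  sumR (map (fun v => flow T v * (phi v - phi (par T v))) (nonsink n T)) =
  sumR (map (fun i => phi (Src i)) (seq 0 n)).
Proof.
  intros phiS. pose proof hF as (_ & _ & _ & _ & _ & Hsrc & Hstn & _).
  transitivity (sumR (map (fun w => phi w * (flow T w - inflow n T w)) (nonsink n T))).
  { transitivity (sumR (map (fun v => phi v * flow T v) (nonsink n T))
                  - sumR (map (fun v => flow T v * phi (par T v)) (nonsink n T))).
    - rewrite <- sumR_minus. apply sumR_ext; intros; ring.
    - rewrite sum_flow_parent, <- sumR_minus by exact phiS. apply sumR_ext; intros; ring. }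
  unfold nonsink. rewrite !map_app, sumR_app, !map_map.
  rewrite (sumR_ext _ (fun i => phi (Src i)) (seq 0 n)).
  2:{ intros i Hi. apply in_seq in Hi. rewrite Hsrc by lia. ring. }
  rewrite (sumR_ext _ (fun _ => 0) (seq 0 (nst T))).
  2:{ intros j Hj. apply in_seq in Hj. rewrite Hstn by lia. ring. }
  rewrite sumR_zero. ring.
Qed.

Definition sink_potential (v : vtx) : R :=
  dist2 (Defs.pos z zBS T v) zBS / INR (d v).

Lemma sink_potential_Sink : sink_potential Sink = 0.
Proof. unfold sink_potential, dist2; simpl. unfold Rdiv. ring. Qed.

Lemma edge_pays_drop (v : vtx) :
  In v (nonsink n T) ->
  sink_potential v - sink_potential (par T v) <= dist2 (Defs.pos z zBS T v) (Defs.pos z zBS T (par T v)).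
Proof.
  intros Hv. destruct hF as (_ & Hp & _).
  pose proof (le_INR _ _ (hops_nonsink_pos v Hv)) as Hdv.
  destruct (Hp v Hv) as [[Hpar|Hpar] _].
  - pose proof (le_INR _ _ (hops_nonsink_pos _ Hpar)) as Hdp.
    pose proof (le_INR _ _ (hops_nonsink_step v Hv)) as Hstep.
    rewrite plus_INR in Hstep. simpl in Hdv, Hdp, Hstep.
    pose proof (dist2_div_drop (Defs.pos z zBS T v) (Defs.pos z zBS T (par T v)) zBS
                  (INR (d v)) (INR (d (par T v))) ltac:(lra) Hstep).
    unfold sink_potential. lra.
  - rewrite Hpar, sink_potential_Sink. simpl in Hdv.
    pose proof (dist2_div_le (Defs.pos z zBS T v) zBS (INR (d v)) Hdv).
    unfold sink_potential. simpl Defs.pos. lra.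
Qed.

(* Sources are at most n + |S| edges from the sink. *)
Lemma source_potential_bound (k : nat) (i : nat) :
  (nst T <= k)%nat -> (i < n)%nat ->
  / INR (n + k + 1) * dist2 (z i) zBS <= sink_potential (Src i).
Proof.
  intros Hk Hi.
  assert (Hv : In (Src i) (nonsink n T)).
  { unfold nonsink. apply in_or_app; left. apply in_map, in_seq; lia. }
  pose proof (le_INR _ _ (hops_nonsink_pos _ Hv)) as Hpos.
  assert (Hle : INR (d (Src i)) <= INR (n + k + 1)).
  { apply le_INR. pose proof (hops_nonsink_bound _ Hv). lia. }
  simpl in Hpos. unfold sink_potential. simpl Defs.pos.
  rewrite Rmult_comm. apply Rmult_le_compat_l; [apply dist2_nonneg|].
  apply Rinv_le_contravar; lra.
Qed.

End FlowTree.

Theorem mainTheorem15 (n k : nat) (z : nat -> point) (zBS : point)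
  (hn : (1 <= n)%nat)
  (hz : forall i j, (i < n)%nat -> (j < n)%nat -> z i = z j -> i = j)
  (hBS : forall i, (i < n)%nat -> z i <> zBS)
  (T : FQST) (hT : is_MFQST n k z zBS T) :
  cost n z zBS T >=
    / INR (n + k + 1) * sumR (map (fun i => dist2 (z i) zBS) (seq 0 n)).
Proof.
  destruct hT as [hF [hk _]].
  pose proof hF as (_ & _ & _ & _ & Hflow & _).
  set (phi := sink_potential z zBS T).
  assert (Hcost : sumR (map (fun v => flow T v * (phi v - phi (par T v))) (nonsink n T))
                  <= cost n z zBS T).
  { apply sumR_le. intros v Hv. apply Rmult_le_compat_l.
    - left. apply Hflow, Hv.
    - exact (edge_pays_drop n z zBS T hF v Hv). }
  rewrite (flow_telescoping n z zBS T hF phi (sink_potential_Sink z zBS T)) in Hcost.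
  assert (Hsrc : / INR (n + k + 1) * sumR (map (fun i => dist2 (z i) zBS) (seq 0 n))
                 <= sumR (map (fun i => phi (Src i)) (seq 0 n))).
  { rewrite <- sumR_scal. apply sumR_le. intros i Hi. apply in_seq in Hi.
    exact (source_potential_bound n z zBS T hF k i hk ltac:(lia)). }
  lra.
Qed.
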